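(* Let $(\mathbf{w},\mathbf{u},q)$ be a sufficiently smooth solution of the GePUP-E formulation (described in the context) on $\Omega\times[t_0,\infty)$. Then $$\frac{\partial(\mathbf{n}\cdot\mathbf{w})}{\partial t}=-\lambda\,\mathbf{n}\cdot\mathbf{w}\quad\text{on }\partial\Omega,$$ and thus $\mathbf{n}\cdot\mathbf{w}(t)=e^{-\lambda(t-t_0)}\mathbf{n}\cdot\mathbf{w}(t_0)$ on $\partial\Omega$. In particular, if $\mathbf{n}\cdot\mathbf{w}(t_0)=0$ on $\partial\Omega$, then $\mathbf{n}\cdot\mathbf{w}(t)=0$ on $\partial\Omega$ for all $t>t_0$.
   Context: $\Omega\subset\mathbb{R}^D$ is a bounded connected open set with sufficiently smooth boundary, unit outward normal $\mathbf{n}$ and unit tangent vector(s) $\boldsymbol{\tau}$ on $\partial\Omega$. $\nu>0$ is the kinematic viscosity, $\mathbf{g}$ a given body force, $\lambda\ge 0$ a penalty parameter. The Leray–Helmholtz projection $\mathscr{P}$ maps a $C^1$ vector field $\mathbf{v}^*$ to $\mathbf{v}^*-\nabla\phi$ where $\Delta\phi=\nabla\cdot\mathbf{v}^*$ in $\Omega$ and $\mathbf{n}\cdot\nabla\phi=\mathbf{n}\cdot\mathbf{v}^*$ on $\partial\Omega$ (so $\mathscr{P}\mathbf{v}^*$ is divergence-free with zero normal component). The GePUP-E formulation is the system for $(\mathbf{w},\mathbf{u},q)$: $\partial_t\mathbf{w}=\mathbf{g}-\mathbf{u}\cdot\nabla\mathbf{u}-\nabla q+\nu\Delta\mathbf{w}$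 in $\Omega$; $\mathbf{w}\cdot\boldsymbol{\tau}=0$ and $\nabla\cdot\mathbf{w}=0$ on $\partial\Omega$; $\mathbf{u}=\mathscr{P}\mathbf{w}$ in $\Omega$, $\mathbf{u}\cdot\mathbf{n}=0$ on $\partial\Omega$; $\Delta q=\nabla\cdot(\mathbf{g}-\mathbf{u}\cdot\nabla\mathbf{u})$ in $\Omega$; $\mathbf{n}\cdot\nabla q=\mathbf{n}\cdot(\mathbf{g}-\mathbf{u}\cdot\nabla\mathbf{u}+\nu\Delta\mathbf{w})+\lambda\,\mathbf{n}\cdot\mathbf{w}$ on $\partial\Omega$; with initial condition $\mathbf{w}(\mathbf{x},t_0)=\mathbf{u}(\mathbf{x},t_0)$ for all $\mathbf{x}\in\overline{\Omega}$. *)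

From HB Require Import structures.
From mathcomp Require Import all_boot all_order all_algebra.
From mathcomp Require Import all_classical all_reals all_analysis.
Set Implicit Arguments. Unset Strict Implicit. Unset Printing Implicit Defensive.
Import Order.TTheory GRing.Theory Num.Theory.
Import numFieldNormedType.Exports.
Local Open Scope classical_set_scope.
Local Open Scope ring_scope.

Section GePUP.
Variable R : realType.

Fixpoint Ck (k : nat) (V W : normedModType R) (f : V -> W) : Prop :=
  match k with
  | 0 => continuous f
  | k.+1 => (forall x, differentiable f x) /\ forall v : V, Ck k (fun x => 'D_v f x)
  end.

Definition smooth (V W : normedModType R) (f : V -> W) : Prop := forall k, Ck k f.

Variable D : nat.
Notation vec := 'rV[R]_D.

Definition dotp (a b : vec) : R := \sum_(i < D) a ord0 i * b ord0 i.
Definition enorm (a : vec) : R := Num.sqrt (dotp a a).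

Definition evec (i : 'I_D) : vec := \row_j (i == j)%:R.

Definition partial (W : normedModType R) (i : 'I_D) (f : vec -> W) (x : vec) : W :=
  'D_(evec i) f x.

Definition grad (f : vec -> R) (x : vec) : vec := \row_i partial i f x.
Definition div (f : vec -> vec) (x : vec) : R := \sum_(i < D) partial i f x ord0 i.
Definition lap (W : normedModType R) (f : vec -> W) (x : vec) : W :=
  \sum_(i < D) partial i (partial i f) x.
Definition convect (u v : vec -> vec) (x : vec) : vec :=
  \sum_(i < D) u x ord0 i *: partial i v x.

Definition boundary (A : set vec) : set vec := closure A `\` interior A.

(* Omega is a bounded connected open set with smooth boundary and n is its unit
   outward normal: Omega = {psi < 0}, boundary = {psi = 0}, grad psi <> 0 there,
   and n = grad psi / |grad psi| on the boundary. *)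
Definition smooth_domain (Om : set vec) (n : vec -> vec) : Prop :=
  open Om /\ bounded_set Om /\ connected Om /\
  exists psi : vec -> R, smooth psi /\
    (forall x, Om x <-> psi x < 0) /\
    (forall x, boundary Om x <-> psi x = 0) /\
    (forall x, boundary Om x ->
       grad psi x != 0 /\ n x = (enorm (grad psi x))^-1 *: grad psi x).

Definition st_smooth (W : normedModType R) (f : vec -> R -> W) : Prop :=
  smooth (fun p : vec * R => f p.1 p.2).

(* u(.,t) = P w(.,t) (Leray-Helmholtz projection) for t >= t0:
   u = w - grad phi, Lap phi = div w in Omega, n.grad phi = n.w on the boundary *)
Definition leray_rel (Om : set vec) (n : vec -> vec) (t0 : R)
    (w u : vec -> R -> vec) : Prop :=
  forall t, t0 <= t -> exists phi : vec -> R,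
    Ck 2 phi /\
    (forall x, closure Om x -> u x t = w x t - grad phi x) /\
    (forall x, Om x -> lap phi x = div (fun y => w y t) x) /\
    (forall x, boundary Om x -> dotp (n x) (grad phi x) = dotp (n x) (w x t)).

Definition GePUP_E (Om : set vec) (n : vec -> vec) (nu lam t0 : R)
    (g w u : vec -> R -> vec) (q : vec -> R -> R) : Prop :=
  (forall x t, Om x -> t0 <= t ->
     derive1 (fun s => w x s) t =
       g x t - convect (fun y => u y t) (fun y => u y t) x
       - grad (fun y => q y t) x + nu *: lap (fun y => w y t) x) /\
  (forall x t, boundary Om x -> t0 <= t ->
     (forall tau : vec, dotp tau (n x) = 0 -> dotp (w x t) tau = 0) /\
     div (fun y => w y t) x = 0) /\
  leray_rel Om n t0 w u /\
  (forall x t, boundary Om x -> t0 <= t -> dotp (u x t) (n x) = 0) /\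
  (forall x t, Om x -> t0 <= t ->
     lap (fun y => q y t) x =
       div (fun y => g y t - convect (fun z => u z t) (fun z => u z t) y) x) /\
  (forall x t, boundary Om x -> t0 <= t ->
     dotp (n x) (grad (fun y => q y t) x) =
       dotp (n x) (g x t - convect (fun y => u y t) (fun y => u y t) x
                   + nu *: lap (fun y => w y t) x)
       + lam * dotp (n x) (w x t)) /\
  (forall x, closure Om x -> w x t0 = u x t0).

End GePUP.

From HB Require Import structures.
From mathcomp Require Import all_boot all_order all_algebra.
From mathcomp Require Import all_classical all_reals all_analysis.
From mathcomp Require Import lra.
Import Order.TTheory GRing.Theory Num.Theory.
Import numFieldNormedType.Exports.
Local Open Scope classical_set_scope.
Local Open Scope ring_scope.

(* Dotting the momentum equation with the fixed vector n(x) gives an identity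
   between continuous functions of the space variable; it holds in Om, hence on
   its closure, in particular at the boundary point x.  There the pressure
   Neumann condition cancels every term except lam (n . w), leaving the linear
   ODE d/dt (n . w) = - lam (n . w), whose solutions decay exponentially. *)

Lemma continuous_sum {R : realType} (T : topologicalType) (W : normedModType R)
    (I : Type) (r : seq I) (F : I -> T -> W) :
  (forall i, continuous (F i)) -> continuous (fun x => \sum_(i <- r) F i x).
Proof. by move=> cF; apply: continuous_big => //; exact: add_continuous. Qed.

Section smooth_derivatives.
Context {R : realType} {V W : normedModType R} {f : V -> W}.
Hypothesis smooth_f : smooth f.

Lemma smooth_continuous : continuous f.
Proof. exact: (smooth_f 0). Qed.

Lemma smooth_derivable x v : derivable f x v.
Proof. by have [df _] := smooth_f 1; exact/diff_derivable/df. Qed.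

Lemma smooth_continuous_derive v : continuous ('D_v f).
Proof. by have [_ Df] := smooth_f 1; exact: Df. Qed.

Lemma smooth_continuous_derive2 v v' : continuous ('D_v' ('D_v f)).
Proof. by have [_ /(_ v)[_ DDf]] := smooth_f 2; exact: DDf. Qed.

End smooth_derivatives.

Section dotp.
Context {R : realType} {D : nat}.
Implicit Types (a b c : 'rV[R]_D).

Lemma dotpD c a b : dotp c (a + b) = dotp c a + dotp c b.
Proof. by rewrite /dotp -big_split; apply: eq_bigr => i _; rewrite mxE mulrDr. Qed.

Lemma dotpN c a : dotp c (- a) = - dotp c a.
Proof. by rewrite /dotp -sumrN; apply: eq_bigr => i _; rewrite mxE mulrN. Qed.

Lemma dotpB c a b : dotp c (a - b) = dotp c a - dotp c b.
Proof. by rewrite dotpD dotpN. Qed.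

Lemma dotpZ c k a : dotp c (k *: a) = k * dotp c a.
Proof. by rewrite /dotp mulr_sumr; apply: eq_bigr => i _; rewrite mxE mulrCA. Qed.

Lemma continuous_dotp c : continuous (dotp c).
Proof.
apply: continuous_sum => i b; apply: continuousM; first exact: cst_continuous.
exact: coord_continuous.
Qed.

Lemma is_derive_dotp c (f : R -> 'rV[R]_D) t : derivable f t 1 ->
  is_derive t 1 (fun s => dotp c (f s)) (dotp c ('D_1 f t)).
Proof.
move=> df.
have quotient_cvg : (fun h : R => h^-1 *: (dotp c (f (h *: 1 + t)) - dotp c (f t)))
    @ 0^' --> dotp c ('D_1 f t).
  apply: cvg_trans (cvg_comp _ _ df (continuous_dotp c _)).
  by apply: near_eq_cvg; near=> h; rewrite /= dotpZ dotpB.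
apply: DeriveDef; [apply/cvg_ex; exists (dotp c ('D_1 f t)) | apply: cvg_lim] => //.
Unshelve. all: by end_near.
Qed.

End dotp.

Lemma continuous_closure_eq {R : realType} (T : topologicalType) (A : set T)
    (f g : T -> R) :
  continuous f -> continuous g -> (forall x, A x -> f x = g x) ->
  forall x, closure A x -> f x = g x.
Proof.
move=> cf cg fg x Ax; apply/subr0_eq.
have closed_fg : closed ((f - g) @^-1` [set 0]).
  apply: preimage_closed => [y _|]; last exact: closed_eq.
  exact: (continuousB (cf y) (cg y)).
suff : closure ((f - g) @^-1` [set 0]) x by rewrite -(closure_id _).1.
by apply: closureS Ax => y Ay; apply/eqP; rewrite subr_eq0 fg.
Qed.

Section space_time_slices.
Context {R : realType} {V W : normedModType R}.
Implicit Types (F : V * R -> W) (x v : V) (t : R).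

Lemma difference_quotient_space_slice F x v t :
  (fun h : R => h^-1 *: ((F \o shift (x, t)) (h *: (v, 0)) - F (x, t))) =
  (fun h : R => h^-1 *: (((fun y => F (y, t)) \o shift x) (h *: v) - F (x, t))).
Proof.
apply/funext => h /=.
have -> : h *: (v, 0) + (x, t) = (h *: v + x, h *: 0 + t) by [].
by rewrite scaler0 add0r.
Qed.

Lemma difference_quotient_time_slice F x t :
  (fun h : R => h^-1 *: ((F \o shift (x, t)) (h *: (0, 1)) - F (x, t))) =
  (fun h : R => h^-1 *: (((fun s => F (x, s)) \o shift t) (h *: 1) - F (x, t))).
Proof.
apply/funext => h /=.
have -> : h *: ((0 : V), 1) + (x, t) = (h *: 0 + x, h *: 1 + t) by [].
by rewrite scaler0 add0r.
Qed.

Lemma derive_space_slice F x v t :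
  'D_v (fun y => F (y, t)) x = 'D_((v, 0)) F (x, t).
Proof. by rewrite /derive difference_quotient_space_slice. Qed.

Lemma derive_time_slice F x t :
  'D_1 (fun s => F (x, s)) t = 'D_((0, 1)) F (x, t).
Proof. by rewrite /derive difference_quotient_time_slice. Qed.

Lemma derivable_time_slice F x t :
  derivable F (x, t) (0, 1) -> derivable (fun s => F (x, s)) t 1.
Proof. by rewrite /derivable difference_quotient_time_slice. Qed.

Lemma continuous_space_slice F t : continuous F -> continuous (fun y => F (y, t)).
Proof.
move=> cF y; apply: continuous_comp (cF _).
exact/differentiable_continuous/differentiable_pair.
Qed.

End space_time_slices.

Lemma is_derive_expRMl {R : realType} (a s : R) :
  is_derive s 1 (fun s => expR (a * s)) (a * expR (a * s)).
Proof.
have := is_derive1_comp (is_derive_expR (a * s)) (is_deriveZ a (is_derive_id s 1)).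
by rewrite /GRing.scale /= mulr1 mulrC.
Qed.

Lemma linear_ode_expR {R : realType} (f : R -> R) (a t0 : R) :
  (forall s, derivable f s 1) -> (forall s, t0 <= s -> derive1 f s = a * f s) ->
  forall t, t0 <= t -> f t = expR (a * (t - t0)) * f t0.
Proof.
move=> df f'E t t0t.
pose h := (fun s => expR (- a * s)) * f.
have dh s : s \in `]t0, t[ -> is_derive s 1 h 0.
  rewrite in_itv => /andP[/ltW t0s _].
  have := is_deriveM (is_derive_expRMl (- a) s) (derivableP (df s)).
  by rewrite -derive1E f'E // /GRing.scale /= -/h; congr is_derive; lra.
have ch : {within `[t0, t], continuous h}.
  apply: continuous_subspaceT => s; apply: differentiable_continuous.
  by apply/derivable1_diffP; apply: derivableM => //; exact: ex_derive.
have [c _] := MVT_segment t0t dh ch; rewrite mul0r => /subr0_eq h_const.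
have {}h_const : expR (- a * t) * f t = expR (- a * t0) * f t0 := h_const.
have -> : f t = expR (a * t) * (expR (- a * t) * f t).
  by rewrite mulrA -expRD mulNr subrr expR0 mul1r.
by rewrite h_const mulrA -expRD; congr (expR _ * _); lra.
Qed.

Lemma partial_space_slice {R : realType} {D : nat} {W : normedModType R}
    (F : 'rV[R]_D * R -> W) i t :
  partial i (fun y => F (y, t)) = fun y => 'D_((evec R i, 0)) F (y, t).
Proof. by apply/funext => y; rewrite /partial derive_space_slice. Qed.

Section smooth_space_time_fields.
Context {R : realType} {D : nat} {W : normedModType R} {F : 'rV[R]_D * R -> W}.
Hypothesis smooth_F : smooth F.

Lemma continuous_partial_space_slice i t : continuous (partial i (fun y => F (y, t))).
Proof.
rewrite partial_space_slice.
exact: (continuous_space_slice ('D_((evec R i, 0)) F) t (smooth_continuous_derive smooth_F _)).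
Qed.

Lemma continuous_lap_space_slice t : continuous (lap (fun y => F (y, t))).
Proof.
rewrite /lap; apply: continuous_sum => i.
rewrite partial_space_slice (partial_space_slice ('D_((evec R i, 0)) F)).
exact: (continuous_space_slice ('D_((evec R i, 0)) ('D_((evec R i, 0)) F)) t
  (smooth_continuous_derive2 smooth_F _ _)).
Qed.

Lemma continuous_derive_time_slice t :
  continuous (fun y => derive1 (fun s => F (y, s)) t).
Proof.
have -> : (fun y => derive1 (fun s => F (y, s)) t) = fun y => 'D_((0, 1)) F (y, t).
  by apply/funext => y; rewrite derive1E derive_time_slice.
exact: (continuous_space_slice ('D_((0, 1)) F) t (smooth_continuous_derive smooth_F _)).
Qed.

Lemma derivable_smooth_time_slice x t : derivable (fun s => F (x, s)) t 1.
Proof. exact/derivable_time_slice/(smooth_derivable smooth_F). Qed.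

End smooth_space_time_fields.

Section smooth_vector_fields.
Context {R : realType} {D : nat}.

Lemma continuous_convect_space_slice (u v : 'rV[R]_D * R -> 'rV[R]_D) t :
  continuous u -> smooth v ->
  continuous (convect (fun y => u (y, t)) (fun y => v (y, t))).
Proof.
move=> cu sv; rewrite /convect; apply: continuous_sum => i y.
apply: continuousZ; last exact: continuous_partial_space_slice.
apply: (@continuous_comp _ _ _ (fun z => u (z, t)) (fun M : 'rV[R]_D => M ord0 i)).
  exact: continuous_space_slice.
exact: coord_continuous.
Qed.

Lemma continuous_dotp_grad_space_slice (c : 'rV[R]_D) (q : 'rV[R]_D * R -> R) t :
  smooth q -> continuous (fun y => dotp c (grad (fun z => q (z, t)) y)).
Proof.
move=> sq; rewrite /dotp; apply: continuous_sum => i y.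
apply: continuousM; first exact: cst_continuous.
have -> : (fun z => grad (fun z => q (z, t)) z ord0 i) = partial i (fun z => q (z, t)).
  by apply/funext => z; rewrite mxE.
exact: continuous_partial_space_slice.
Qed.

End smooth_vector_fields.

Section GePUP_E_normal_component.
Context {R : realType} {D : nat}.
Context {Om : set 'rV[R]_D} {n : 'rV[R]_D -> 'rV[R]_D} {nu lam t0 : R}.
Context {g w u : 'rV[R]_D -> R -> 'rV[R]_D} {q : 'rV[R]_D -> R -> R}.
Hypotheses (smooth_g : st_smooth g) (smooth_w : st_smooth w).
Hypotheses (smooth_u : st_smooth u) (smooth_q : st_smooth q).

Let forcing x t :=
  g x t - convect (fun y => u y t) (fun y => u y t) x + nu *: lap (fun y => w y t) x.

Hypothesis momentum : forall x t, Om x -> t0 <= t ->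
  derive1 (fun s => w x s) t = g x t - convect (fun y => u y t) (fun y => u y t) x
    - grad (fun y => q y t) x + nu *: lap (fun y => w y t) x.

Lemma normal_momentum_closure c x t : closure Om x -> t0 <= t ->
  dotp c (derive1 (fun s => w x s) t) =
    dotp c (forcing x t) - dotp c (grad (fun y => q y t) x).
Proof.
move=> Om_x t0t.
pose lhs y := dotp c (derive1 (fun s => w y s) t).
pose rhs y := dotp c (forcing y t) - dotp c (grad (fun z => q z t) y).
apply: (@continuous_closure_eq R _ Om lhs rhs _ _ _ x Om_x) => [y|y|y Om_y].
- exact: (continuous_comp (continuous_derive_time_slice smooth_w t y) (continuous_dotp c _)).
- have cg := continuous_space_slice (fun p => g p.1 p.2) t (smooth_continuous smooth_g).
  pose up p := u p.1 p.2.
  have cc := continuous_convect_space_slice up up t (smooth_continuous smooth_u) smooth_u.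
  have cl := continuous_lap_space_slice smooth_w t.
  have cforcing : {for y, continuous (forcing ^~ t)}.
    exact: continuousD (continuousB (cg y) (cc y)) (continuousZl_tmp (cl y)).
  exact: continuousB (continuous_comp cforcing (continuous_dotp c _))
    (continuous_dotp_grad_space_slice c (fun p => q p.1 p.2) t smooth_q y).
- by rewrite /lhs /rhs /forcing momentum // !(dotpD, dotpN); lra.
Qed.

Hypothesis pressure_neumann : forall x t, boundary Om x -> t0 <= t ->
  dotp (n x) (grad (fun y => q y t) x) = dotp (n x) (forcing x t) + lam * dotp (n x) (w x t).

Lemma derive1_normal_component_boundary x t : boundary Om x -> t0 <= t ->
  derive1 (fun s => dotp (n x) (w x s)) t = - lam * dotp (n x) (w x t).
Proof.
move=> bd_x t0t; rewrite derive1E.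
have [_ ->] := is_derive_dotp (n x) (w x) t (derivable_smooth_time_slice smooth_w x t).
rewrite -derive1E normal_momentum_closure //; last by case: bd_x.
by rewrite pressure_neumann //; lra.
Qed.

End GePUP_E_normal_component.

Theorem lemma5 (R : realType) (D : nat) (Om : set 'rV[R]_D) (n : 'rV[R]_D -> 'rV[R]_D)
    (nu lam t0 : R) (g w u : 'rV[R]_D -> R -> 'rV[R]_D) (q : 'rV[R]_D -> R -> R) :
  smooth_domain Om n -> 0 < nu -> 0 <= lam ->
  st_smooth g -> st_smooth w -> st_smooth u -> st_smooth q ->
  GePUP_E Om n nu lam t0 g w u q ->
  (forall x t, boundary Om x -> t0 <= t ->
     derive1 (fun s => dotp (n x) (w x s)) t = - lam * dotp (n x) (w x t)) /\
  (forall x t, boundary Om x -> t0 <= t ->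
     dotp (n x) (w x t) = expR (- lam * (t - t0)) * dotp (n x) (w x t0)) /\
  ((forall x, boundary Om x -> dotp (n x) (w x t0) = 0) ->
     forall x t, boundary Om x -> t0 < t -> dotp (n x) (w x t) = 0).
Proof.
move=> _ _ _ sg sw su sq [momentum [_ [_ [_ [_ [neumann _]]]]]].
have normal_ode := derive1_normal_component_boundary sg sw su sq momentum neumann.
have normal_decay x t : boundary Om x -> t0 <= t ->
    dotp (n x) (w x t) = expR (- lam * (t - t0)) * dotp (n x) (w x t0).
  move=> bd_x; apply: (linear_ode_expR (fun s => dotp (n x) (w x s))) => [s|s].
    by have [] := is_derive_dotp (n x) (w x) s (derivable_smooth_time_slice sw x s).
  exact: normal_ode.
split=> //; split=> // w0_normal x t bd_x /ltW t0t.
by rewrite normal_decay // w0_normal // mulr0.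
Qed.
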